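(* Let $\mathcal V$ be a multivector field on $X$ and $S\subset X$. If $S$ is an isolated invariant set, then $S$ is locally closed.
   Context: $X$ is a finite $T_0$ topological space. For $A\subset X$, $\operatorname{cl}A$ is its closure and $\operatorname{mo}A:=\operatorname{cl}A\setminus A$. $A$ is locally closed if it is the intersection of an open and a closed subset of $X$. $H$ denotes relative singular homology. A multivector is a nonempty locally closed subset of $X$; a multivector field $\mathcal V$ on $X$ is a partition of $X$ into multivectors. For $x\in X$, $[x]$ denotes the element of $\mathcal V$ containing $x$. A multivector $V$ is critical if $H(\operatorname{cl}V,\operatorname{mo}V)\neq0$, regular otherwise. Put $\Pi_{\mathcal V}(x):=[x]\cup\operatorname{cl}\{x\}$ and $\Pi_{\mathcal V}(A):=\bigcup_{x\in A}\Pi_{\mathcal V}(x)$. A $\mathbb Z$-interval is $\mathbb Z\cap I$ for a real interval $I$. A solution in $A\subset X$ is a map $\varphi:D\to A$ on a $\mathbb Z$-interval $D$ with $\varphi(i+1)\in\Pi_{\mathcal V}(\varphi(i))$ whenever $i,i+1\in D$; it is full if $D=\mathbb Z$, and a path if $D$ is bounded, its endpoints being $\varphi(\min D)$ and $\varphi(\max D)$. A full solution $\varphi$ is essential if for every $t\in\mathbb Z$ with $[\varphi(t)]$ regular, the set $\{s\in\mathbb Z:\varphi(s)\notin[\varphi(t)]\}$ is unbounded below and unbounded above. $\operatorname{Inv}A$ is the set of $x\in A$ such that there is an essential full solution $\varphi$ with image in $A$ and $\varphi(0)=x$; $A$ is invariant if $\operatorname{Inv}A=A$. A closed set $N$ isolates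 an invariant set $S\subset N$ if (a) every path in $N$ with both endpoints in $S$ has image contained in $S$, and (b) $\Pi_{\mathcal V}(S)\subset N$. An invariant set is an isolated invariant set if some closed set isolates it. *)

From Stdlib Require Import Reals ZArith List ClassicalEpsilon.
Import ListNotations.

Set Implicit Arguments.

Section Top.
Variable X : Type.
Variable op : (X -> Prop) -> Prop.

Definition is_finite_T0_space : Prop :=
  (exists l : list X, forall x, In x l) /\
  op (fun _ => True) /\
  op (fun _ => False) /\
  (forall F : (X -> Prop) -> Prop, (forall U, F U -> op U) ->
      op (fun x => exists U, F U /\ U x)) /\
  (forall U V, op U -> op V -> op (fun x => U x /\ V x)) /\
  (forall U V, op U -> (forall x, U x <-> V x) -> op V) /\
  (forall x y, x <> y -> exists U, op U /\ ~ (U x <-> U y)).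

Definition is_closed (C : X -> Prop) : Prop := op (fun x => ~ C x).

Definition cl (A : X -> Prop) : X -> Prop :=
  fun x => forall C, is_closed C -> (forall y, A y -> C y) -> C x.

Definition mo (A : X -> Prop) : X -> Prop := fun x => cl A x /\ ~ A x.

Definition locally_closed (A : X -> Prop) : Prop :=
  exists U C, op U /\ is_closed C /\ forall x, A x <-> (U x /\ C x).

Definition in_simplex (n : nat) (p : nat -> R) : Prop :=
  (forall i, (i <= n)%nat -> (0 <= p i)%R) /\
  (forall i, (n < i)%nat -> p i = 0%R) /\
  sum_f_R0 p n = 1%R.

Definition rel_open (n : nat) (P : (nat -> R) -> Prop) : Prop :=
  forall p, in_simplex n p -> P p ->
    exists eps, (0 < eps)%R /\
      forall q, in_simplex n q ->
        (forall i, (i <= n)%nat -> (Rabs (q i - p i) < eps)%R) -> P q.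

(* A singular n-simplex is a map from the standard simplex; we extend it by
   None outside the simplex so that equality of simplices is equality of maps
   on the standard simplex. *)
Definition simplex := (nat -> R) -> option X.

Definition sing_simplex (n : nat) (A : X -> Prop) (s : simplex) : Prop :=
  (forall p, ~ in_simplex n p -> s p = None) /\
  (forall p, in_simplex n p -> exists x, s p = Some x /\ A x) /\
  (forall U, op U -> rel_open n (fun p => exists x, s p = Some x /\ U x)).

(* i-th face inclusion Delta^(m) -> Delta^(m+1) *)
Definition coface (i : nat) (p : nat -> R) : nat -> R :=
  fun j => if Nat.ltb j i then p j else if Nat.eqb j i then 0%R else p (j - 1)%nat.

Definition face (m i : nat) (s : simplex) : simplex :=
  fun p => if excluded_middle_informative (in_simplex m p)
           then s (coface i p) else None.

Definition chain := list (Z * simplex).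

Definition coef (c : chain) (t : simplex) : Z :=
  fold_right (fun e acc =>
     ((if excluded_middle_informative (snd e = t) then fst e else 0) + acc)%Z) 0%Z c.

(* boundary of a chain of (m+1)-simplices *)
Definition bd (m : nat) (c : chain) : chain :=
  flat_map (fun e =>
     map (fun i => ((if Nat.even i then fst e else - fst e)%Z, face m i (snd e)))
         (seq 0 (S (S m)))) c.

Definition chain_in (n : nat) (A : X -> Prop) (c : chain) : Prop :=
  Forall (fun e => sing_simplex n A (snd e)) c.

(* H_n(A,B) <> 0 for some n: some relative cycle is not a relative boundary *)
Definition homology_nonzero (A B : X -> Prop) : Prop :=
  exists (n : nat) (c : chain),
    chain_in n A c /\
    (match n with
     | O => True
     | S m => exists d, chain_in m B d /\ forall t, coef (bd m c) t = coef d t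
     end) /\
    ~ (exists e f, chain_in (S n) A e /\ chain_in n B f /\
         forall t, coef c t = (coef (bd n e) t + coef f t)%Z).

(* A partition of X is given by an equivalence relation Vr; [x] = Vr x. *)
Definition is_mvf (Vr : X -> X -> Prop) : Prop :=
  (forall x, Vr x x) /\ (forall x y, Vr x y -> Vr y x) /\
  (forall x y z, Vr x y -> Vr y z -> Vr x z) /\
  (forall x, locally_closed (Vr x)).

Definition critical (V : X -> Prop) : Prop := homology_nonzero (cl V) (mo V).

Definition Pi (Vr : X -> X -> Prop) (x : X) : X -> Prop :=
  fun y => Vr x y \/ cl (fun z => z = x) y.

Definition Pi_set (Vr : X -> X -> Prop) (A : X -> Prop) : X -> Prop :=
  fun y => exists x, A x /\ Pi Vr x y.

Definition full_solution (Vr : X -> X -> Prop) (phi : Z -> X) : Prop :=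
  forall i, Pi Vr (phi i) (phi (i + 1)%Z).

Definition essential (Vr : X -> X -> Prop) (phi : Z -> X) : Prop :=
  full_solution Vr phi /\
  forall t, ~ critical (Vr (phi t)) ->
    (forall m, exists s, (s <= m)%Z /\ ~ Vr (phi t) (phi s)) /\
    (forall m, exists s, (m <= s)%Z /\ ~ Vr (phi t) (phi s)).

Definition Inv (Vr : X -> X -> Prop) (A : X -> Prop) : X -> Prop :=
  fun x => exists phi, essential Vr phi /\ (forall t, A (phi t)) /\ phi 0%Z = x.

Definition invariant (Vr : X -> X -> Prop) (A : X -> Prop) : Prop :=
  forall x, Inv Vr A x <-> A x.

(* A path is a solution on a bounded (nonempty) Z-interval [a,b]. *)
Definition isolates (Vr : X -> X -> Prop) (N S : X -> Prop) : Prop :=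
  is_closed N /\ (forall x, S x -> N x) /\
  (forall (phi : Z -> X) (a b : Z), (a <= b)%Z ->
     (forall i, (a <= i < b)%Z -> Pi Vr (phi i) (phi (i + 1)%Z)) ->
     (forall i, (a <= i <= b)%Z -> N (phi i)) ->
     S (phi a) -> S (phi b) ->
     forall i, (a <= i <= b)%Z -> S (phi i)) /\
  (forall y, Pi_set Vr S y -> N y).

Definition isolated_invariant (Vr : X -> X -> Prop) (S : X -> Prop) : Prop :=
  invariant Vr S /\ exists N, isolates Vr N S.

End Top.

(* A closed set N isolating S makes S convex in the specialization order:
   if z is in S, y lies in the closure of z and x in the closure of y with
   x in S, then z -> y -> x is a path in N with both endpoints in S, so y is
   in S.  In a finite space the closure of a set is the union of the closures
   of its points, and a convex set S is the intersection of the closed set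
   cl S with the open complement of cl (mo S). *)
From Stdlib Require Import Reals ZArith List ClassicalEpsilon.
From Stdlib Require Import Classical Lia.

Set Implicit Arguments.

Section FiniteSpace.
Variable X : Type.
Variable op : (X -> Prop) -> Prop.
Hypothesis space : is_finite_T0_space op.

Lemma open_ext {U V : X -> Prop} : op U -> (forall x, U x <-> V x) -> op V.
Proof. destruct space as (_ & _ & _ & _ & _ & ext & _); exact (ext U V). Qed.

Lemma closed_ext {C D : X -> Prop} :
  is_closed op C -> (forall x, C x <-> D x) -> is_closed op D.
Proof.
  intros HC HCD; apply (open_ext HC); intros x.
  now split; intros Hn Hx; apply Hn, HCD.
Qed.

Lemma closed_empty : is_closed op (fun _ => False).
Proof.
  destruct space as (_ & full & _).
  apply (open_ext full); tauto.
Qed.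

Lemma closed_union {C D : X -> Prop} :
  is_closed op C -> is_closed op D -> is_closed op (fun x => C x \/ D x).
Proof.
  destruct space as (_ & _ & _ & _ & inter & _).
  intros HC HD; apply (open_ext (inter _ _ HC HD)); tauto.
Qed.

Lemma closed_list_union (l : list (X -> Prop)) :
  (forall C, In C l -> is_closed op C) ->
  is_closed op (fun x => exists C, In C l /\ C x).
Proof.
  induction l as [|C l IH]; intros Hl.
  - apply (closed_ext closed_empty).
    now split; [|intros (C & [] & _)].
  - apply (closed_ext (closed_union (Hl C (or_introl eq_refl))
                                    (IH (fun D HD => Hl D (or_intror HD))))).
    intros x; split.
    + intros [HCx | (D & HD & HDx)]; [exists C | exists D]; simpl; auto.
    + intros (D & [<- | HD] & HDx); [left | right; exists D]; auto.
Qed.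

Lemma cl_closed (A : X -> Prop) : is_closed op (cl op A).
Proof.
  destruct space as (_ & _ & _ & union & _).
  pose (F U := exists C, is_closed op C /\ (forall y, A y -> C y) /\
                          forall x, U x <-> ~ C x).
  assert (HF : forall U, F U -> op U).
  { intros U (C & HC & _ & HU).
    apply (open_ext HC); intros x; symmetry; apply HU. }
  apply (open_ext (union F HF)); intros x; split.
  - intros (U & (C & HC & HAC & HU) & HUx) Hx.
    exact (proj1 (HU x) HUx (Hx C HC HAC)).
  - intros Hx.
    apply not_all_ex_not in Hx as [C Hx].
    apply imply_to_and in Hx as [HC Hx].
    apply imply_to_and in Hx as [HAC HCx].
    exists (fun x => ~ C x); split; [exists C; repeat split; auto | exact HCx].
Qed.

Lemma subset_cl (A : X -> Prop) x : A x -> cl op A x.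
Proof. intros Hx C _ HAC; exact (HAC x Hx). Qed.

Lemma cl_minimal (A C : X -> Prop) x :
  is_closed op C -> (forall y, A y -> C y) -> cl op A x -> C x.
Proof. intros HC HAC Hx; exact (Hx C HC HAC). Qed.

(* Finiteness is what makes the union of the point closures closed. *)
Lemma cl_points (A : X -> Prop) x :
  cl op A x -> exists a, A a /\ cl op (fun w => w = a) x.
Proof.
  destruct space as ((l & Hl) & _).
  intros Hx.
  set (Cs := map (fun a w => A a /\ cl op (fun v => v = a) w) l).
  assert (HCs : exists C, In C Cs /\ C x).
  { apply (@cl_minimal A (fun w => exists C, In C Cs /\ C w) x); [| | exact Hx].
    - apply closed_list_union; intros C HC.
      apply in_map_iff in HC as (a & <- & _).
      destruct (classic (A a)) as [Ha | Ha].
      + apply (closed_ext (cl_closed (fun v => v = a))); tauto.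
      + apply (closed_ext closed_empty); tauto.
    - intros y Hy; exists (fun w => A y /\ cl op (fun v => v = y) w); split.
      + apply in_map_iff; exists y; auto.
      + split; [exact Hy | now apply subset_cl]. }
  destruct HCs as (C & HC & HCx).
  apply in_map_iff in HC as (a & <- & _); exists a; exact HCx.
Qed.

Definition convex (A : X -> Prop) : Prop :=
  forall x y z, A z -> cl op (fun w => w = z) y -> cl op (fun w => w = y) x ->
    A x -> A y.

Lemma convex_locally_closed (A : X -> Prop) : convex A -> locally_closed op A.
Proof.
  intros Hconv.
  exists (fun x => ~ cl op (mo op A) x), (cl op A).
  split; [exact (cl_closed (mo op A)) |].
  split; [exact (cl_closed A) |].
  intros x; split.
  - intros Hx; split; [| now apply subset_cl].
    intros Hmo.
    apply cl_points in Hmo as (y & [HclAy HnAy] & Hxy).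
    apply cl_points in HclAy as (z & Hz & Hyz).
    exact (HnAy (Hconv x y z Hz Hyz Hxy Hx)).
  - intros [Hnmo HclAx]; apply NNPP; intros HnAx.
    now apply Hnmo, subset_cl.
Qed.

End FiniteSpace.

Lemma isolates_convex (X : Type) (op : (X -> Prop) -> Prop)
  (Vr : X -> X -> Prop) (N S : X -> Prop) :
  isolates op Vr N S -> convex op S.
Proof.
  intros (_ & HSN & Hpath & HPiN) x y z Hz Hyz Hxy Hx.
  set (phi i := if Z.eqb i 0 then z else if Z.eqb i 1 then y else x).
  assert (HyN : N y) by (apply HPiN; exists z; split; [exact Hz | now right]).
  refine (Hpath phi 0%Z 2%Z _ _ _ Hz Hx 1%Z _); [lia | | | lia].
  - intros i Hi.
    assert (i = 0 \/ i = 1)%Z as [-> | ->] by lia; now right.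
  - intros i _; unfold phi.
    destruct (Z.eqb i 0); [now apply HSN |].
    destruct (Z.eqb i 1); [exact HyN | now apply HSN].
Qed.

Theorem proposition4p11 (X : Type) (op : (X -> Prop) -> Prop)
  (Vr : X -> X -> Prop) (S : X -> Prop) :
  is_finite_T0_space op ->
  is_mvf op Vr ->
  isolated_invariant op Vr S ->
  locally_closed op S.
Proof.
  intros space _ (_ & N & HN).
  exact (convex_locally_closed space (isolates_convex HN)).
Qed.
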